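(* Suppose Assumption 1 (context) holds. For any $u,v\in\mathbb{D}$ and any $j\in\{1,\dots,\widehat n\}$ such that $u_i=v_i$ for all $i\ne j$, we have $|\nabla_jd(u)-\nabla_jd(v)|\le L_j\|u-v\|$, where $L_j=\frac{\|A_j\|^2}{n^2\mu}$ if $j\le n$, $L_j=\frac{\|B_{j-n,:}\|^2}{\mu}$ if $n<j\le n+p$, and $L_j=\frac{L_{g_{j-n-p}}^2}{\mu}$ if $j>n+p$.
   Context: Integers $n,t\ge1$, $p,m\ge0$; $A\in\mathbb{R}^{t\times n}$ with columns $A_j$; $B\in\mathbb{R}^{p\times t}$ with rows $B_{j,:}$; $b\in\mathbb{R}^p$; $f:\mathbb{R}^t\to\mathbb{R}$; $g_i:\mathbb{R}^t\to\mathbb{R}$ ($i\le m$). Assumption 1 includes: $f$ is $\mu$-strongly convex ($\mu>0$); each $g_i$ is convex and every subgradient of $g_i$ has norm at most $L_{g_i}$ (plus convex $M$-Lipschitz loss functions, a Slater point, and finite optimal value for the associated constrained problem). $\widehat n=n+p+m$, $\mathbb{D}=\{u\in\mathbb{R}^{\widehat n}:u_{n+p+1},\dots,u_{\widehat n}\ge0\}$. For $u\in\mathbb{D}$: $L_f(x,u)=f(x)+\langle u_{1:n},A^Tx/n\rangle+\langle u_{n+1:n+p},Bx+b\rangle+\sum_{i=1}^mu_{n+p+i}g_i(x)$, $x^*(u)=\arg\min_xL_f(x,u)$ (unique), $d(u)=-L_f(x^*(u),u)$, which is differentiable on $\mathbb{D}$ with $\nabla d(u)=-[(A^Tx^*(u)/n)^T,(Bx^*(u)+b)^T,g_1(x^*(u)),\dots,g_m(x^*(u))]^T$;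 $\nabla_jd(u)$ is its $j$-th entry. *)

From HB Require Import structures.
From mathcomp Require Import all_boot all_order all_algebra.
From mathcomp Require Import reals.
Set Implicit Arguments. Unset Strict Implicit. Unset Printing Implicit Defensive.
Import Order.TTheory GRing.Theory Num.Theory.
Local Open Scope ring_scope.

Section Defs.
Variable R : realType.

Definition dotv {t : nat} (x y : 'cV[R]_t) : R := \sum_(i < t) x i 0 * y i 0.

Definition mnorm {a b : nat} (M : 'M[R]_(a, b)) : R :=
  Num.sqrt (\sum_(i < a) \sum_(j < b) M i j ^+ 2).

Definition strongly_convex {t : nat} (mu : R) (f : 'cV[R]_t -> R) : Prop :=
  forall (x y : 'cV[R]_t) (th : R), 0 <= th -> th <= 1 ->
    f (th *: x + (1 - th) *: y) <=
      th * f x + (1 - th) * f y - mu / 2 * th * (1 - th) * mnorm (x - y) ^+ 2.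

Definition convex_fun {t : nat} (g : 'cV[R]_t -> R) : Prop :=
  forall (x y : 'cV[R]_t) (th : R), 0 <= th -> th <= 1 ->
    g (th *: x + (1 - th) *: y) <= th * g x + (1 - th) * g y.

Definition subgradient {t : nat} (g : 'cV[R]_t -> R) (x s : 'cV[R]_t) : Prop :=
  forall y : 'cV[R]_t, g x + dotv s (y - x) <= g y.

Definition inD {n p m : nat} (u : 'cV[R]_(n + p + m)) : Prop :=
  forall k : 'I_m, 0 <= u (rshift (n + p) k) 0.

Definition Lf {t n p m : nat} (A : 'M[R]_(t, n)) (B : 'M[R]_(p, t))
  (b : 'cV[R]_p) (f : 'cV[R]_t -> R) (g : 'I_m -> 'cV[R]_t -> R)
  (x : 'cV[R]_t) (u : 'cV[R]_(n + p + m)) : R :=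
  f x
  + \sum_(i < n) u (lshift m (lshift p i)) 0 * ((A^T *m x) i 0 / n%:R)
  + \sum_(k < p) u (lshift m (rshift n k)) 0 * (B *m x + b) k 0
  + \sum_(k < m) u (rshift (n + p) k) 0 * g k x.

(* j-th entry of grad d(u), where x = x^*(u) *)
Definition grad_d_j {t n p m : nat} (A : 'M[R]_(t, n)) (B : 'M[R]_(p, t))
  (b : 'cV[R]_p) (g : 'I_m -> 'cV[R]_t -> R)
  (x : 'cV[R]_t) (j : 'I_(n + p + m)) : R :=
  match split j with
  | inl j1 => match split j1 with
              | inl i => - ((A^T *m x) i 0 / n%:R)
              | inr k => - ((B *m x + b) k 0)
              end
  | inr k => - g k x
  end.

Definition Lconst {t n p m : nat} (A : 'M[R]_(t, n)) (B : 'M[R]_(p, t))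
  (Lg : 'I_m -> R) (mu : R) (j : 'I_(n + p + m)) : R :=
  match split j with
  | inl j1 => match split j1 with
              | inl i => mnorm (col i A) ^+ 2 / (n%:R ^+ 2 * mu)
              | inr k => mnorm (row k B) ^+ 2 / mu
              end
  | inr k => Lg k ^+ 2 / mu
  end.

End Defs.

(* For u in D the Lagrangian L_f(., u) is mu-strongly convex, so its minimiser
   x*(u) satisfies the quadratic growth bound
   mu/2 |x*(u) - y|^2 <= L_f(y, u) - L_f(x*(u), u).  When u and v differ only
   in coordinate j, L_f(x, u) - L_f(x, v) = (v_j - u_j) grad_j(x), where
   grad_j(x*(u)) = grad_j d(u); adding the two growth bounds therefore gives
   mu |x*(u) - x*(v)|^2 <= (u_j - v_j) (grad_j d(u) - grad_j d(v)).
   Moreover x |-> grad_j(x) is c_j-Lipschitz with L_j = c_j^2 / mu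
   (Cauchy-Schwarz for the affine coordinates, bounded subgradients for the
   g_i), and the two inequalities combine into the claim.  Lipschitz continuity
   of g_i needs subgradients to exist; in finite dimension they are obtained
   from a linear minorant built one coordinate at a time, each step being a
   one-dimensional Hahn-Banach extension that uses the completeness of R. *)

From HB Require Import structures.
From mathcomp Require Import all_boot all_order all_algebra.
From mathcomp Require Import reals ring lra.
Import Order.TTheory GRing.Theory Num.Theory.
Set Implicit Arguments. Unset Strict Implicit. Unset Printing Implicit Defensive.
Local Open Scope ring_scope.

Lemma split_lshift m n (i : 'I_m) : split (lshift n i) = inl i.
Proof. exact: (unsplitK (inl i)). Qed.

Lemma split_rshift m n (i : 'I_n) : split (rshift m i) = inr i.
Proof. exact: (unsplitK (inr i)). Qed.

Section Euclidean.
Variable R : realType.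
Implicit Types (t : nat).

Lemma dotvC t (x y : 'cV[R]_t) : dotv x y = dotv y x.
Proof. by apply: eq_bigr => i _; rewrite mulrC. Qed.

Lemma dotvDr t (x y z : 'cV[R]_t) : dotv x (y + z) = dotv x y + dotv x z.
Proof. by rewrite /dotv -big_split; apply: eq_bigr => i _; rewrite mxE mulrDr. Qed.

Lemma dotvZr t (x y : 'cV[R]_t) a : dotv x (a *: y) = a * dotv x y.
Proof. by rewrite /dotv mulr_sumr; apply: eq_bigr => i _; rewrite mxE mulrCA. Qed.

Lemma dotvNr t (x y : 'cV[R]_t) : dotv x (- y) = - dotv x y.
Proof. by rewrite -scaleN1r dotvZr mulN1r. Qed.

Lemma dotvBr t (x y z : 'cV[R]_t) : dotv x (y - z) = dotv x y - dotv x z.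
Proof. by rewrite dotvDr dotvNr. Qed.

Lemma dotvDl t (x y z : 'cV[R]_t) : dotv (x + y) z = dotv x z + dotv y z.
Proof. by rewrite dotvC dotvDr !(dotvC z). Qed.

Lemma dotvZl t (x y : 'cV[R]_t) a : dotv (a *: x) y = a * dotv x y.
Proof. by rewrite dotvC dotvZr dotvC. Qed.

Lemma dotv0r t (x : 'cV[R]_t) : dotv x 0 = 0.
Proof. by rewrite -(scale0r (0 : 'cV[R]_t)) dotvZr mul0r. Qed.

Lemma dotv_delta t (x : 'cV[R]_t) k : dotv x (delta_mx k 0) = x k 0.
Proof.
rewrite /dotv (bigD1 k) //= mxE !eqxx mulr1 big1 ?addr0 // => i ne_ik.
by rewrite mxE (negPf ne_ik) mulr0.
Qed.

Lemma mulmx_dotv a t (M : 'M[R]_(a, t)) (x : 'cV[R]_t) i :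
  (M *m x) i 0 = dotv (row i M)^T x.
Proof. by rewrite mxE; apply: eq_bigr => l _; rewrite !mxE. Qed.

Lemma mnorm_ge0 a b (M : 'M[R]_(a, b)) : 0 <= mnorm M.
Proof. exact: sqrtr_ge0. Qed.

Lemma mnorm_tr a b (M : 'M[R]_(a, b)) : mnorm M^T = mnorm M.
Proof.
rewrite /mnorm exchange_big; congr Num.sqrt.
by apply: eq_bigr => i _; apply: eq_bigr => j _; rewrite mxE.
Qed.

Lemma mnormN a b (M : 'M[R]_(a, b)) : mnorm (- M) = mnorm M.
Proof.
by rewrite /mnorm; congr Num.sqrt; apply: eq_bigr => i _; apply: eq_bigr => j _; rewrite mxE sqrrN.
Qed.

Lemma mnormB a b (M N : 'M[R]_(a, b)) : mnorm (M - N) = mnorm (N - M).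
Proof. by rewrite -mnormN opprB. Qed.

Lemma mnorm_dotv t (x : 'cV[R]_t) : mnorm x = Num.sqrt (dotv x x).
Proof. by rewrite /mnorm; congr Num.sqrt; apply: eq_bigr => i _; rewrite big_ord1. Qed.

Lemma mnorm_single t (x : 'cV[R]_t) j :
  (forall i, i != j -> x i 0 = 0) -> mnorm x = `|x j 0|.
Proof.
move=> x0; rewrite mnorm_dotv /dotv (bigD1 j) //= big1 ?addr0 -?expr2 ?sqrtr_sqr //.
by move=> i /x0 ->; rewrite mul0r.
Qed.

Lemma dotv_le t (x y : 'cV[R]_t) : `|dotv x y| <= mnorm x * mnorm y.
Proof.
have lagrange : \sum_i \sum_j (x i 0 * y j 0 - x j 0 * y i 0) ^+ 2 =
    (dotv x x * dotv y y - dotv x y ^+ 2) *+ 2.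
  have sq i j : (x i 0 * y j 0 - x j 0 * y i 0) ^+ 2 =
      x i 0 * x i 0 * (y j 0 * y j 0) + y i 0 * y i 0 * (x j 0 * x j 0)
      - (x i 0 * y i 0 * (x j 0 * y j 0)) *+ 2 by ring.
  have -> : (dotv x x * dotv y y - dotv x y ^+ 2) *+ 2 =
      dotv x x * dotv y y + dotv y y * dotv x x - (dotv x y * dotv x y) *+ 2.
    by ring.
  rewrite /dotv !big_distrlr -sumrMnl -!big_split -sumrB; apply: eq_bigr => i _.
  rewrite -sumrMnl -!big_split -sumrB; apply: eq_bigr => j _; exact: sq.
have : 0 <= (dotv x x * dotv y y - dotv x y ^+ 2) *+ 2.
  by rewrite -lagrange; apply: sumr_ge0 => i _; apply: sumr_ge0 => j _; apply: sqr_ge0.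
rewrite pmulrn_lge0 // subr_ge0 => le_sq.
have xx_ge0 : 0 <= dotv x x by apply: sumr_ge0 => i _; rewrite -expr2 sqr_ge0.
by rewrite !mnorm_dotv -sqrtrM // -sqrtr_sqr ler_wsqrtr.
Qed.

Lemma dotv_lipschitz t (a x y : 'cV[R]_t) :
  `|dotv a x - dotv a y| <= mnorm a * mnorm (x - y).
Proof. by rewrite -dotvBr dotv_le. Qed.

End Euclidean.

Section Convexity.
Variables (R : realType) (t : nat).
Implicit Types (h : 'cV[R]_t -> R) (mu : R).

Lemma convex_fun_affine h :
  (forall x y th, h (th *: x + (1 - th) *: y) = th * h x + (1 - th) * h y) ->
  convex_fun h.
Proof. by move=> hE x y th _ _; rewrite hE. Qed.

Lemma convex_funZ c h : 0 <= c -> convex_fun h -> convex_fun (fun x => c * h x).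
Proof.
move=> c_ge0 hc x y th th_ge0 th_le1.
by rewrite mulrCA [(1 - th) * _]mulrCA -mulrDr ler_wpM2l // hc.
Qed.

Lemma convex_fun_sum (I : Type) (r : seq I) (P : pred I) (F : I -> 'cV[R]_t -> R) :
  (forall i, convex_fun (F i)) -> convex_fun (fun x => \sum_(i <- r | P i) F i x).
Proof.
move=> hF x y th th_ge0 th_le1.
by rewrite !mulr_sumr -big_split ler_sum // => i _; apply: hF.
Qed.

Lemma strongly_convexD mu f h :
  strongly_convex mu f -> convex_fun h -> strongly_convex mu (fun x => f x + h x).
Proof.
move=> hf hh x y th th_ge0 th_le1.
have := hf x y th th_ge0 th_le1; have := hh x y th th_ge0 th_le1; lra.
Qed.

Lemma le_of_scaled_le (q D : R) :
  0 <= D -> (forall th, 0 <= th -> th < 1 -> q * th <= D) -> q <= D.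
Proof.
move=> D_ge0 hq; rewrite leNgt; apply/negP => D_lt_q.
have q_gt0 : 0 < q by exact: le_lt_trans D_lt_q.
have th_ge0 : 0 <= (q + D) / (2 * q) by rewrite divr_ge0 //; lra.
have th_lt1 : (q + D) / (2 * q) < 1 by rewrite ltr_pdivrMr; lra.
have := hq _ th_ge0 th_lt1.
have -> : q * ((q + D) / (2 * q)) = (q + D) / 2 by field; lra.
lra.
Qed.

Lemma strongly_convex_growth mu (F : 'cV[R]_t -> R) (xs : 'cV[R]_t) :
  strongly_convex mu F -> (forall y, F xs <= F y) ->
  forall y, mu / 2 * mnorm (xs - y) ^+ 2 <= F y - F xs.
Proof.
move=> hF hmin y; apply: le_of_scaled_le => [|th th_ge0 th_lt1].
  by have := hmin y; lra.
set q := mu / 2 * _.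
have conv := hF xs y th th_ge0 (ltW th_lt1).
have qE : mu / 2 * th * (1 - th) * mnorm (xs - y) ^+ 2 = (1 - th) * (q * th).
  by rewrite /q; ring.
rewrite qE in conv.
rewrite -(ler_pM2l (_ : 0 < 1 - th)); last by lra.
have := hmin (th *: xs + (1 - th) *: y); lra.
Qed.

End Convexity.

Lemma exists_between (R : realType) (P Q : R -> Prop) :
  (exists x, P x) -> (exists y, Q y) -> (forall x y, P x -> Q y -> x <= y) ->
  exists c, (forall x, P x -> x <= c) /\ (forall y, Q y -> c <= y).
Proof.
move=> [x Px] [y Qy] PQ; exists (sup P); split.
  by apply: ub_le_sup; exists y => z Pz; exact: PQ.
by move=> z Qz; apply: ge_sup; [exists x | move=> w Pw; exact: PQ].
Qed.

Section LinearMinorant.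
Variables (R : realType) (t : nat) (G : 'cV[R]_t -> R).
Hypothesis convexG : convex_fun G.

Definition vanish_from k (v : 'cV[R]_t) := forall i : 'I_t, (k <= i)%N -> v i 0 = 0.

Lemma vanish_from0 k : vanish_from k 0.
Proof. by move=> i _; rewrite mxE. Qed.

Lemma vanish_fromD k a b w v :
  vanish_from k w -> vanish_from k v -> vanish_from k (a *: w + b *: v).
Proof. by move=> hw hv i ki; rewrite !mxE hw // hv // !mulr0 addr0. Qed.

Section Extend.
Variables (k : nat) (kt : (k < t)%N) (s : 'cV[R]_t).
Hypothesis s_le : forall v, vanish_from k v -> dotv s v <= G v.
Let e : 'cV[R]_t := delta_mx (Ordinal kt) 0.

Lemma slope_le w v a b : vanish_from k w -> vanish_from k v -> 0 < a -> 0 < b ->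
  (dotv s w - G (w - b *: e)) / b <= (G (v + a *: e) - dotv s v) / a.
Proof.
move=> hw hv a_gt0 b_gt0.
have ab_gt0 : 0 < a + b by lra.
(* At th = a / (a + b) the segment from w - b e to v + a e meets the span
   where s_le applies. *)
set th := a / (a + b).
have thE : th * (a + b) = a by rewrite /th divfK // lt0r_neq0.
have th1E : (1 - th) * (a + b) = b by rewrite mulrBl mul1r thE; lra.
have th_ge0 : 0 <= th by rewrite divr_ge0 // ltW.
have th_le1 : th <= 1 by rewrite ler_pdivrMr //; lra.
have mid : th *: (w - b *: e) + (1 - th) *: (v + a *: e) = th *: w + (1 - th) *: v.
  have thb : th * b = (1 - th) * a by rewrite /th; field; lra.
  by rewrite scalerBr scalerDr !scalerA thb addrACA addNr addr0.
have := convexG (w - b *: e) (v + a *: e) th_ge0 th_le1; rewrite mid.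
have := s_le (vanish_fromD th (1 - th) hw hv); rewrite dotvDr !dotvZr => s_mid G_mid.
have : th * (dotv s w - G (w - b *: e)) <= (1 - th) * (G (v + a *: e) - dotv s v) by lra.
move=> /(ler_wpM2r (ltW ab_gt0)); rewrite mulrAC thE mulrAC th1E.
by rewrite ler_pdivrMr // mulrAC ler_pdivlMr // mulrC [_ * b]mulrC.
Qed.

Lemma exists_slope : exists c, forall v a,
  vanish_from k v -> dotv s v + a * c <= G (v + a *: e).
Proof.
pose P x := exists w b, [/\ vanish_from k w, 0 < b & x = (dotv s w - G (w - b *: e)) / b].
pose Q y := exists v a, [/\ vanish_from k v, 0 < a & y = (G (v + a *: e) - dotv s v) / a].
have P_ne : exists x, P x.
  by exists ((dotv s 0 - G (0 - 1 *: e)) / 1), 0, 1; split; rewrite ?ltr01 //; exact: vanish_from0.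
have Q_ne : exists y, Q y.
  by exists ((G (0 + 1 *: e) - dotv s 0) / 1), 0, 1; split; rewrite ?ltr01 //; exact: vanish_from0.
have PQ : forall x y, P x -> Q y -> x <= y.
  by move=> _ _ [w [b [hw b_gt0 ->]]] [v [a [hv a_gt0 ->]]]; exact: slope_le.
have [c [Pc cQ]] := exists_between P_ne Q_ne PQ.
exists c => v a hv.
have [a_lt0|a_gt0|->] := ltrgtP a 0.
- have /Pc : P ((dotv s v - G (v - (- a) *: e)) / (- a)).
    by exists v, (- a); split; rewrite ?oppr_gt0.
  by rewrite scaleNr opprK ler_pdivrMr ?oppr_gt0 //; lra.
- have /cQ : Q ((G (v + a *: e) - dotv s v) / a) by exists v, a.
  by rewrite ler_pdivlMr //; lra.
- by rewrite mul0r scale0r !addr0; exact: s_le.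
Qed.

Lemma minorant_extend : exists s', forall v, vanish_from k.+1 v -> dotv s' v <= G v.
Proof.
have [c hc] := exists_slope.
exists (s + (c - dotv s e) *: e) => v hv.
set a := v (Ordinal kt) 0.
have hw : vanish_from k (v - a *: e).
  move=> i ki; rewrite !mxE; have [->|ne_ik] := eqVneq i (Ordinal kt).
    by rewrite !eqxx mulr1 subrr.
  have lt_ki : (k < i)%N.
    by rewrite ltn_neqAle ki andbT; apply: contra ne_ik => /eqP ki_eq; apply/eqP/val_inj.
  by rewrite hv // mulr0 subrr.
have ew : dotv e (v - a *: e) = 0 by rewrite dotvC dotv_delta; exact: hw.
have ee : dotv e e = 1 by rewrite dotv_delta mxE !eqxx.
have shift w : dotv e w = 0 ->
    dotv (s + (c - dotv s e) *: e) (w + a *: e) = dotv s w + a * c.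
  by move=> ew0; rewrite dotvDl dotvZl !dotvDr !dotvZr ew0 ee; ring.
by have := hc _ a hw; rewrite -(shift _ ew) subrK.
Qed.

End Extend.

Lemma linear_minorant : G 0 = 0 -> exists s, forall v, dotv s v <= G v.
Proof.
move=> G0.
have minorant k : (k <= t)%N -> exists s, forall v, vanish_from k v -> dotv s v <= G v.
  elim: k => [_|k IH kt].
    exists 0 => v v0; have -> : v = 0 by apply/matrixP => i j; rewrite ord1 mxE; exact: v0.
    by rewrite dotv0r G0.
  have [s hs] := IH (ltnW kt); exact: (minorant_extend kt hs).
have [s hs] := minorant t (leqnn t).
by exists s => v; apply: hs => i; rewrite leqNgt ltn_ord.
Qed.

End LinearMinorant.

Section Subgradients.
Variables (R : realType) (t : nat) (g : 'cV[R]_t -> R).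
Hypothesis convexg : convex_fun g.

Lemma subgradient_exists x : exists s, subgradient g x s.
Proof.
pose G y := g (x + y) - g x.
have convexG : convex_fun G.
  move=> y1 y2 th th_ge0 th_le1; rewrite /G.
  have -> : x + (th *: y1 + (1 - th) *: y2) = th *: (x + y1) + (1 - th) *: (x + y2).
    by rewrite !scalerDr addrACA -scalerDl subrKC scale1r.
  have := convexg (x + y1) (x + y2) th_ge0 th_le1; lra.
have G0 : G 0 = 0 by rewrite /G addr0 subrr.
have [s hs] := linear_minorant convexG G0.
by exists s => y; have := hs (y - x); rewrite /G subrKC; lra.
Qed.

Variable L : R.
Hypothesis subgradient_le : forall x s, subgradient g x s -> mnorm s <= L.

Lemma subgradient_bound_ge0 : 0 <= L.
Proof. by have [s hs] := subgradient_exists 0; exact: le_trans (mnorm_ge0 s) (subgradient_le hs). Qed.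

Lemma convex_sub_le x y : g x - g y <= L * mnorm (x - y).
Proof.
have [s hs] := subgradient_exists x.
have hxy : g x - g y <= dotv s (x - y) by have := hs y; rewrite -opprB dotvNr; lra.
apply: (le_trans hxy); apply: (le_trans (ler_norm _)); apply: (le_trans (dotv_le _ _)).
by apply: ler_wpM2r; [exact: mnorm_ge0 | exact: subgradient_le hs].
Qed.

Lemma convex_lipschitz x y : `|g x - g y| <= L * mnorm (x - y).
Proof. by rewrite ler_norml convex_sub_le andbT lerNl opprB mnormB convex_sub_le. Qed.

End Subgradients.

Lemma bound_of_monotone_lipschitz (R : realType) (mu c r d e : R) :
  0 < mu -> 0 <= c -> 0 <= r -> mu * r ^+ 2 <= d * e -> `|e| <= c * r ->
  `|e| <= c ^+ 2 / mu * `|d|.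
Proof.
move=> mu_gt0 c_ge0 r_ge0 mono lip.
have mono' : mu * r ^+ 2 <= `|d| * (c * r).
  apply: (le_trans mono); rewrite (le_trans (ler_norm _)) // normrM.
  exact: ler_wpM2l.
have mu_r : mu * r <= c * `|d|.
  have [->|r_neq0] := eqVneq r 0; first by rewrite mulr0 mulr_ge0.
  have r_gt0 : 0 < r by rewrite lt_neqAle eq_sym r_neq0.
  by rewrite -(ler_pM2r r_gt0) -mulrA -expr2 (le_trans mono') // mulrCA mulrA.
rewrite mulrAC ler_pdivlMr // (le_trans (ler_wpM2r (ltW mu_gt0) lip)) //.
by rewrite expr2 -!mulrA; apply: ler_wpM2l => //; rewrite mulrC.
Qed.

Section Lagrangian.
Variables (R : realType) (t n p m : nat).
Variables (A : 'M[R]_(t, n)) (B : 'M[R]_(p, t)) (b : 'cV[R]_p).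
Variables (f : 'cV[R]_t -> R) (g : 'I_m -> 'cV[R]_t -> R) (mu : R).
Hypotheses (hf : strongly_convex mu f) (hg : forall i, convex_fun (g i)).

Local Notation L := (Lf A B b f g).
Local Notation grad := (grad_d_j A B b g).

Lemma Lf_gradE x u : L x u = f x - \sum_j u j 0 * grad x j.
Proof.
rewrite /Lf /grad_d_j !big_split_ord /=; apply/esym.
under [\sum_(i < n) _]eq_bigr do rewrite !split_lshift mulrN.
under [\sum_(i < p) _]eq_bigr do rewrite split_lshift split_rshift mulrN.
under [\sum_(i < m) _]eq_bigr do rewrite split_rshift mulrN.
rewrite !sumrN; ring.
Qed.

Lemma convex_Lf_term u j : inD u -> convex_fun (fun x => - (u j 0 * grad x j)).
Proof.
move=> hu; rewrite /grad_d_j; case: split_ordP => [j1 _|k ->].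
  case: (split j1) => [i|k]; apply: convex_fun_affine => x y th.
    rewrite !mulmx_dotv dotvDr !dotvZr; ring.
  rewrite ![(_ + b) _ _]mxE !mulmx_dotv dotvDr !dotvZr; ring.
move=> x y th th_ge0 th_le1; rewrite !mulrN !opprK.
exact: (convex_funZ (hu k) (hg k)).
Qed.

Lemma Lf_strongly_convex u : inD u -> strongly_convex mu (L ^~ u).
Proof.
move=> hu x y th th_ge0 th_le1; rewrite !Lf_gradE.
apply: (strongly_convexD (h := fun x => - \sum_j u j 0 * grad x j)) => //.
move=> x' y' th' th'_ge0 th'_le1; rewrite -!sumrN.
exact: (convex_fun_sum _ _ (fun j => convex_Lf_term j hu)).
Qed.

Lemma Lf_sub_single (u v : 'cV[R]_(n + p + m)) j :
  (forall i, i != j -> u i 0 = v i 0) ->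
  forall x, L x u - L x v = (v j 0 - u j 0) * grad x j.
Proof.
move=> huv x; rewrite !Lf_gradE opprB addrC addrA subrK -sumrB (bigD1 j) //=.
by rewrite big1 ?addr0 ?mulrBl // => i /huv ->; rewrite subrr.
Qed.

Lemma grad_d_j_monotone (u v : 'cV[R]_(n + p + m)) xu xv j :
  inD u -> inD v ->
  (forall y, L xu u <= L y u) -> (forall y, L xv v <= L y v) ->
  (forall i, i != j -> u i 0 = v i 0) ->
  mu * mnorm (xu - xv) ^+ 2 <= (u j 0 - v j 0) * (grad xu j - grad xv j).
Proof.
move=> hu hv hxu hxv huv.
have gu := strongly_convex_growth (Lf_strongly_convex hu) hxu xv.
have gv := strongly_convex_growth (Lf_strongly_convex hv) hxv xu.
rewrite mnormB in gv.
have du := Lf_sub_single huv xu; have dv := Lf_sub_single huv xv.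
lra.
Qed.

Variable Lg : 'I_m -> R.
Hypothesis hLg : forall i x s, subgradient (g i) x s -> mnorm s <= Lg i.

Definition grad_lip j : R :=
  match split j with
  | inl j1 => match split j1 with
              | inl i => mnorm (col i A) / n%:R
              | inr k => mnorm (row k B)
              end
  | inr k => Lg k
  end.

Lemma Lconst_grad_lip j : Lconst A B Lg mu j = grad_lip j ^+ 2 / mu.
Proof.
rewrite /Lconst /grad_lip; case: (split j) => [j1|k] //; case: (split j1) => [i|k] //.
by rewrite expr_div_n invfM mulrA.
Qed.

Lemma grad_lip_ge0 j : 0 <= grad_lip j.
Proof.
rewrite /grad_lip; case: (split j) => [j1|k]; last exact: (subgradient_bound_ge0 (hg k) (@hLg k)).
by case: (split j1) => [i|k]; rewrite ?divr_ge0 ?mnorm_ge0.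
Qed.

Lemma grad_d_j_lipschitz x y j :
  `|grad x j - grad y j| <= grad_lip j * mnorm (x - y).
Proof.
rewrite /grad_d_j /grad_lip; case: (split j) => [j1|k]; last first.
  by rewrite -opprD normrN; exact: (convex_lipschitz (hg k) (@hLg k) x y).
case: (split j1) => [i|k]; rewrite -opprD normrN.
  rewrite -mulrBl normrM normfV normr_nat mulrAC ler_wpM2r ?invr_ge0 //.
  by rewrite !mulmx_dotv -tr_col trmxK dotv_lipschitz.
rewrite ![(_ + b) _ _]mxE opprD addrACA subrr addr0 !mulmx_dotv -(mnorm_tr (row k B)).
exact: dotv_lipschitz.
Qed.

End Lagrangian.

Theorem lemma1 (R : realType) (n t p m : nat) (hn : (0 < n)%N) (ht : (0 < t)%N)
  (A : 'M[R]_(t, n)) (B : 'M[R]_(p, t)) (b : 'cV[R]_p)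
  (f : 'cV[R]_t -> R) (g : 'I_m -> 'cV[R]_t -> R)
  (mu : R) (Lg : 'I_m -> R)
  (hmu : 0 < mu) (hf : strongly_convex mu f)
  (hg : forall i : 'I_m, convex_fun (g i))
  (hLg : forall (i : 'I_m) (x s : 'cV[R]_t), subgradient (g i) x s -> mnorm s <= Lg i)
  (u v : 'cV[R]_(n + p + m)) (xu xv : 'cV[R]_t)
  (hu : inD u) (hv : inD v)
  (hxu : forall y : 'cV[R]_t, Lf A B b f g xu u <= Lf A B b f g y u)
  (hxv : forall y : 'cV[R]_t, Lf A B b f g xv v <= Lf A B b f g y v)
  (j : 'I_(n + p + m)) (huv : forall i : 'I_(n + p + m), i != j -> u i 0 = v i 0) :
  `| grad_d_j A B b g xu j - grad_d_j A B b g xv j |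
    <= Lconst A B Lg mu j * mnorm (u - v).
Proof.
have uv0 i : i != j -> (u - v) i 0 = 0 by move/huv; rewrite !mxE => ->; rewrite subrr.
have -> : mnorm (u - v) = `|u j 0 - v j 0| by rewrite (mnorm_single uv0) !mxE.
rewrite Lconst_grad_lip.
apply: (bound_of_monotone_lipschitz hmu (grad_lip_ge0 A B hg hLg j) (mnorm_ge0 (xu - xv))).
  exact: (grad_d_j_monotone hf hg hu hv hxu hxv huv).
exact: grad_d_j_lipschitz.
Qed.
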